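(* Let $n\geq 2$ and let $L'_n$ be the graph of the $\alpha,\omega$-dicyclobutadieno derivative of $[n-1]$-phenylene (defined in the context). Then the base polynomial counting distances between pairs of degree-2 vertices of $L'_n$ is \begin{eqnarray*} H^{2,2}_{b}(L'_{n}) &=& 2x+(3n-1)x^{3}+2\sum_{k=2}^{n-1}(n-k)x^{3k-2}+4\sum_{k=1}^{n-1}x^{3k-1}\\ &&+2\sum_{k=2}^{n-1}(n-k+1)x^{3k}+2x^{3n-2}+2x^{3n-1}. \end{eqnarray*}
   Context: All graphs are finite, simple and connected; $d(u,v)$ denotes the shortest-path distance and $d_u$ the degree of a vertex $u$. For a graph $G$ and a degree $p$, the base polynomial is $H^{p,p}_{b}(G)=\sum x^{d(u,v)}$, where the sum runs over all unordered pairs $\{u,v\}$ of distinct vertices of $G$ both of degree $p$. Construction of $L'_n$ ($n\ge 2$): take $n-1$ hexagons $H_1,\dots,H_{n-1}$, hexagon $H_i$ being the 6-cycle $a_i b_i c_i d_i e_i f_i a_i$, and for $i=1,\dots,n-2$ add edges $b_i f_{i+1}$ and $c_i e_{i+1}$ (so consecutive hexagons are joined by the 4-cycle $b_i c_i e_{i+1} f_{i+1}$). Then add four new vertices $p,q,r,s$ with edges $pq$, $pf_1$, $qe_1$ (forming the 4-cycle $f_1 e_1 q p$) and $rs$, $rb_{n-1}$, $sc_{n-1}$ (forming the 4-cycle $b_{n-1} c_{n-1} s r$). Thus $L'_n$ has $n-1$ hexagons and $n$ squares, $2n+2$ vertices of degree 2 and $4n-4$ vertices of degree 3. *)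

From mathcomp Require Import all_boot all_order all_algebra.
Set Implicit Arguments. Unset Strict Implicit. Unset Printing Implicit Defensive.
Import GRing.Theory.
Local Open Scope ring_scope.

Section Graph.
Variables (T : finType) (e : rel T).

Definition deg (u : T) : nat := #|[set v | e u v]|.

Fixpoint ball (k : nat) (u : T) : {set T} :=
  if k is k'.+1 then ball k' u :|: [set y | [exists x in ball k' u, e x y]]
  else [set u].

(** shortest-path distance: least k with v within k steps of u
    (the search range 0..#|T|-1 suffices in a connected graph). *)
Definition dist (u v : T) : nat :=
  find (fun k => v \in ball k u) (iota 0 #|T|).

(** base polynomial H^{p,p}_b: sum of x^{d(u,v)} over unordered pairs {u,v}
    of distinct vertices both of degree p (unordered pairs enumerated once via
    the canonical ordering [enum_rank u < enum_rank v]). *)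
Definition base_poly (p : nat) : {poly int} :=
  \sum_(u : T) \sum_(v : T | (enum_rank u < enum_rank v)%N && (deg u == p) && (deg v == p))
     'X^(dist u v).
End Graph.

(** The graph L'_n.  Vertices: inl (i, j) is vertex j of hexagon H_{i+1}
    (i < n-1) with j = 0..5 standing for a,b,c,d,e,f; inr 0,1,2,3 are p,q,r,s. *)
Definition LV (n : nat) : finType := ('I_n.-1 * 'I_6 + 'I_4)%type.

Definition Ladj (n : nat) (x y : LV n) : bool :=
  match x, y with
  | inl (i, j), inl (i', j') =>
      ((i == i' :> nat) && (j' == (j.+1 %% 6)%N :> nat))
      (* b_i f_{i+1} and c_i e_{i+1} *)
      || ((i'  == i.+1 :> nat) &&
          (((j == 1 :> nat) && (j' == 5 :> nat)) || ((j == 2 :> nat) && (j' == 4 :> nat))))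
  | inr k, inr k' =>
      (* p q and r s *)
      ((k == 0 :> nat) && (k' == 1 :> nat)) || ((k == 2 :> nat) && (k' == 3 :> nat))
  | inr k, inl (i, j) =>
      (* p f_1, q e_1, r b_{n-1}, s c_{n-1} *)
      ((k == 0 :> nat) && (i == 0 :> nat) && (j == 5 :> nat))
      || ((k == 1 :> nat) && (i == 0 :> nat) && (j == 4 :> nat))
      || ((k == 2 :> nat) && (i == n.-2 :> nat) && (j == 1 :> nat))
      || ((k == 3 :> nat) && (i == n.-2 :> nat) && (j == 2 :> nat))
  | inl _, inr _ => false
  end.

Definition Lrel (n : nat) : rel (LV n) := fun x y => Ladj x y || Ladj y x.
Arguments Lrel : clear implicits.
Arguments Ladj : clear implicits.

From mathcomp Require Import all_boot all_order all_algebra.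
From mathcomp Require Import zify ring.
Import GRing.Theory.
Set Implicit Arguments. Unset Strict Implicit. Unset Printing Implicit Defensive.

(* L'_n is a ladder with two rows and 3n - 1 columns whose rungs are missing exactly at
   the columns congruent to 2 mod 3 (the absent chords a_i d_i of the hexagons).  In such
   a ladder the distance from (c, r) to (c', r') is |c - c'| + [r != r'], except that the
   two ends of a missing rung are at distance 3.  The vertices of degree 2 fill the columns
   0, 2, 5, ..., 3n - 4, 3n - 2; summing x^d over ordered pairs of them column pair by
   column pair and halving gives the formula. *)

Section DistanceCertificate.
Variables (T : finType) (e : rel T) (u : T) (D : T -> nat).
Hypotheses (D_eq0 : forall v, (D v == 0) = (v == u))
  (D_step : forall x y, e x y -> D y <= (D x).+1)
  (D_back : forall v k, D v = k.+1 -> exists2 w, D w = k & e w v)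
  (D_lt_card : forall v, D v < #|T|).

Lemma ball_certificate k : ball e k u = [set v | D v <= k].
Proof.
elim: k => [|k IHk]; apply/setP => v; first by rewrite !inE leqn0 D_eq0.
rewrite [ball e k.+1 u]/= IHk !inE; apply/orP/idP => [[//|/existsP[x]]|Dv]; first exact: leqW.
  by rewrite inE => /andP[Dx /D_step]; lia.
have [|Dv_gt] := leqP (D v) k; [by left | right].
have [w Dw ewv] : exists2 w, D w = k & e w v by apply: D_back; lia.
by apply/existsP; exists w; rewrite inE Dw leqnn.
Qed.

Lemma dist_certificate v : dist e u v = D v.
Proof.
have find_ge a N : a <= D v < a + N -> find (fun j => D v <= j) (iota a N) = D v - a.
  elim: N a => [|N IHN] a /=; first lia.
  by case: (leqP (D v) a) => Dv_a range; [lia | rewrite IHN; lia].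
rewrite /dist -[RHS]subn0 -(find_ge 0 #|T|) ?D_lt_card //.
by apply: eq_find => j; rewrite ball_certificate inE.
Qed.

End DistanceCertificate.

Section Isomorphism.
Variables (T U : finType) (e : rel T) (e' : rel U) (f : T -> U).
Hypotheses (f_bij : bijective f) (f_edge : forall x y, e' (f x) (f y) = e x y).

Let f_inj : injective f := bij_inj f_bij.

Lemma mem_ball_iso k u v : (f v \in ball e' k (f u)) = (v \in ball e k u).
Proof.
elim: k v => [|k IHk] v; first by rewrite !inE (inj_eq f_inj).
rewrite [ball e' _ _]/= [ball e _ _]/= !inE IHk; congr (_ || _).
have [g fK gK] := f_bij; apply/existsP/existsP => [[y]|[x]].
  by rewrite -[y]gK IHk f_edge => ?; exists (g y).
by rewrite -IHk -f_edge => ?; exists (f x).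
Qed.

Lemma dist_iso u v : dist e' (f u) (f v) = dist e u v.
Proof.
rewrite /dist (bij_eq_card f_bij); apply: eq_find => k; exact: mem_ball_iso.
Qed.

Lemma deg_iso u : deg e' (f u) = deg e u.
Proof.
rewrite /deg -(card_imset _ f_inj); apply: eq_card => y; rewrite !inE.
have [g fK gK] := f_bij; rewrite -[y]gK f_edge.
by apply/idP/imsetP => [euy|[x]]; [exists (g y); rewrite ?inE | rewrite inE => exu /f_inj ->].
Qed.

End Isomorphism.

Lemma sum_ord_andb_eq n (b : bool) a : \sum_(i < n) (b && (i == a :> nat)) = b && (a < n).
Proof.
by case: b; [rewrite -big_mkcond (big_ord1_eq _ (fun=> 1%N)); case: ltnP | rewrite big1].
Qed.

Section Ladder.
Variables (rung : pred nat) (k : nat).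

Definition ladder : rel ('I_k.+1 * bool) := fun x y =>
  [&& x.1 == y.1 :> nat, x.2 != y.2 & rung x.1]
  || (x.2 == y.2) && ((x.1 == y.1.+1 :> nat) || (y.1 == x.1.+1 :> nat)).

Definition ladder_dist (x y : 'I_k.+1 * bool) : nat :=
  (x.1 - y.1) + (y.1 - x.1) + (x.2 != y.2)
  + 2 * [&& x.1 == y.1 :> nat, x.2 != y.2 & ~~ rung x.1].

Lemma ladder_deg x : deg ladder x = rung x.1 + (0 < x.1) + (x.1 < k).
Proof.
rewrite /deg -sum1dep_card big_mkcond /=.
transitivity (\sum_(c < k.+1) \sum_(s : bool) (ladder x (c, s) : nat)).
  by rewrite pair_big; apply: eq_bigr => [[c s]] _.
rewrite (eq_bigr (fun c : 'I_k.+1 => (rung x.1 && (c == x.1 :> nat))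
    + (true && (c == x.1.+1 :> nat)) + (0 < x.1) && (c == x.1.-1 :> nat))); last first.
  move=> c _; rewrite big_bool /ladder /=; case: x => [c0 [] /=]; lia.
by rewrite !big_split !sum_ord_andb_eq /=; case: x => [c0 s] /=; have := ltn_ord c0; lia.
Qed.

Lemma ladder_dist_step u x y : ladder x y -> ladder_dist u y <= (ladder_dist u x).+1.
Proof.
case: u x y => [a r] [b s] [c t]; rewrite /ladder_dist /ladder /=.
by have [->|] := eqVneq (a : nat) b; lia.
Qed.

Lemma ladder_dist_sym u v : ladder_dist u v = ladder_dist v u.
Proof.
by case: u v => [a r] [b s]; rewrite /ladder_dist /=; case: (eqVneq (a : nat) b) => [->|]; lia.
Qed.

Hypotheses (k_gt0 : 0 < k) (rung_dense : forall c, c < k -> rung c || rung c.+1).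

Lemma ladder_dist_back (u v : 'I_k.+1 * bool) j :
  ladder_dist u v = j.+1 -> exists2 w, ladder_dist u w = j & ladder w v.
Proof.
case: u v => [a r] [b s]; rewrite /ladder_dist /ladder /=.
have := ltn_ord a; have := ltn_ord b => b_lt a_lt.
have [ab|ba|<-] := ltngtP a b => Dv.
- have [rung_b|no_rung] := boolP ((r != s) && rung b).
    by exists (b, r); rewrite /= ?eqxx; lia.
  have dense_a : a.+1 = b -> rung a || rung b by move=> <-; apply: rung_dense; lia.
  by exists (inord b.-1, s); rewrite /= inordK ?eqxx; lia.
- have [rung_b|no_rung] := boolP ((r != s) && rung b).
    by exists (b, r); rewrite /= ?eqxx; lia.
  have dense_b : b.+1 = a -> rung b || rung a by move=> <-; apply: rung_dense; lia.
  by exists (inord b.+1, s); rewrite /= inordK ?eqxx; lia.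
- have [rung_a|no_rung] := boolP (rung a); first by exists (a, r); rewrite /= ?eqxx; lia.
  by exists (inord (if a < k then a.+1 else a.-1), s);
    case: ltnP => /= ?; rewrite inordK ?eqxx; lia.
Qed.

Lemma ladder_distE u v : dist ladder u v = ladder_dist u v.
Proof.
apply: dist_certificate => [w|x y|w j|w].
- case: u w => [a r] [b s]; rewrite /ladder_dist xpair_eqE -val_eqE /=.
  by apply/eqP/idP; lia.
- exact: ladder_dist_step.
- exact: ladder_dist_back.
- rewrite card_prod card_bool card_ord; case: u w => [a r] [b s].
  by rewrite /ladder_dist /=; have := ltn_ord a; have := ltn_ord b; lia.
Qed.

End Ladder.
Arguments ladder : clear implicits.

Definition Lrung (c : nat) : bool := c %% 3 != 2.

Definition Lladder n : rel ('I_(3 * n - 2).+1 * bool) := ladder Lrung (3 * n - 2).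
Arguments Lladder : clear implicits.

Lemma Lladder_dist n : 1 < n -> forall u v, dist (Lladder n) u v = ladder_dist Lrung u v.
Proof. by move=> n_gt1 u v; apply: ladder_distE => [|c _]; rewrite /Lrung; lia. Qed.

(* Hexagon H_(i+1) occupies the columns 3i+1 (f, e), 3i+2 (a, d) and 3i+3 (b, c); p, q sit
   in column 0 and r, s in column 3n-2.  The top row is formed by a, b, f, p and r. *)
Definition Lcol n (x : LV n) : nat :=
  match x with
  | inl (i, j) => 3 * i + nth 0 [:: 2; 3; 3; 2; 1; 1] j
  | inr k => if k < 2 then 0 else 3 * n - 2
  end.

Definition Lrow n (x : LV n) : bool :=
  match x with inl (_, j) => (j : nat) \in [:: 0; 1; 5] | inr k => ~~ odd k end.

Definition Lcoord n (x : LV n) : 'I_(3 * n - 2).+1 * bool := (inord (Lcol x), Lrow x).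

Lemma Lcol_le n (x : LV n) : Lcol x <= 3 * n - 2.
Proof.
case: x => [[i [[|[|[|[|[|[|j]]]]]] Hj]]|k] //=; last by case: ifP.
all: have := ltn_ord i; lia.
Qed.

Lemma Lladder_Lcoord n : 1 < n -> forall x y, Lladder n (Lcoord x) (Lcoord y) = Lrel n x y.
Proof.
move=> n_gt1 x y; rewrite /Lladder /ladder /= !inordK ?ltnS ?Lcol_le //.
case: x => [[i [[|[|[|[|[|[|j]]]]]] Hj]]|[[|[|[|[|k]]]] Hk]] //;
case: y => [[i' [[|[|[|[|[|[|j']]]]]] Hj']]|[[|[|[|[|k']]]] Hk']] //;
rewrite /Lrel /Ladj /Lrung /=; try (have := ltn_ord i); try (have := ltn_ord i'); lia.
Qed.

Lemma Lcoord_inj n : 0 < n -> injective (@Lcoord n).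
Proof.
move=> n_gt0 x y [/(congr1 val)]; rewrite /= !inordK ?ltnS ?Lcol_le //.
case: x => [[i [[|[|[|[|[|[|j]]]]]] Hj]]|[[|[|[|[|k]]]] Hk]] //;
case: y => [[i' [[|[|[|[|[|[|j']]]]]] Hj']]|[[|[|[|[|k']]]] Hk']] //= Ecol Erow;
try (have := ltn_ord i); try (have := ltn_ord i'); try lia;
by move=> *; first [congr (inl (_, _)); apply/val_inj => /=; lia | congr inr; apply/val_inj].
Qed.

Lemma Lcoord_bij n : 0 < n -> bijective (@Lcoord n).
Proof.
move=> n_gt0; apply: inj_card_bij (Lcoord_inj n_gt0) _.
rewrite !card_prod card_sum card_prod !card_ord card_bool; lia.
Qed.

Lemma Lrel_dist n : 1 < n ->
  forall u v, dist (Lrel n) u v = ladder_dist Lrung (Lcoord u) (Lcoord v).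
Proof.
move=> n_gt1 u v; have n_gt0 : 0 < n by lia.
by rewrite -(dist_iso (Lcoord_bij n_gt0) (Lladder_Lcoord n_gt1)) Lladder_dist.
Qed.

Definition deg2_col n g : nat := if g == 0 then 0 else if g == n then 3 * n - 2 else 3 * g - 1.

Definition deg2_vertex n (j : 'I_n.+1 * bool) : 'I_(3 * n - 2).+1 * bool :=
  (inord (deg2_col n j.1), j.2).
Arguments deg2_vertex : clear implicits.

Lemma deg2_col_le n g : g <= n -> deg2_col n g <= 3 * n - 2.
Proof. by rewrite /deg2_col; repeat case: ifP => ?; lia. Qed.

Lemma deg2_col_ltn n g g' : g' < g <= n -> deg2_col n g' < deg2_col n g.
Proof. by rewrite /deg2_col; repeat case: ifP => ?; lia. Qed.

Lemma deg2_col_inj n g g' : g <= n -> g' <= n -> deg2_col n g = deg2_col n g' -> g = g'.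
Proof. by move=> g_le g'_le; have := @deg2_col_ltn n g g'; have := @deg2_col_ltn n g' g; lia. Qed.

Lemma Lrung_deg2_col n g : g <= n -> Lrung (deg2_col n g) = (g == 0) || (g == n).
Proof. by rewrite /Lrung /deg2_col; repeat case: ifP => ?; lia. Qed.

Lemma deg2_vertex_col n (j : 'I_n.+1 * bool) : (deg2_vertex n j).1 = deg2_col n j.1 :> nat.
Proof. by rewrite inordK // ltnS deg2_col_le // -ltnS. Qed.

Lemma deg2_vertex_inj n : injective (deg2_vertex n).
Proof.
move=> [g s] [g' s'] E; have [_ ->] := E; congr pair; apply/val_inj.
have : (deg2_vertex n (g, s)).1 = (deg2_vertex n (g', s')).1 :> nat by rewrite E.
by rewrite !deg2_vertex_col; apply: deg2_col_inj; rewrite -ltnS.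
Qed.

Lemma Lladder_deg2 n : 1 < n -> forall v,
  (deg (Lladder n) v == 2) = (v \in deg2_vertex n @: setT).
Proof.
move=> n_gt1 v; rewrite ladder_deg; apply/idP/imsetP => [deg2|[j _ ->]]; last first.
  case: j => g s; rewrite deg2_vertex_col /= Lrung_deg2_col; last by rewrite -ltnS.
  by have := ltn_ord g; rewrite /deg2_col; repeat (case: ifP => ?); lia.
case: v deg2 => c s /= deg2.
pose g := if c == 0 :> nat then 0 else if c == 3 * n - 2 :> nat then n else (c + 1) %/ 3.
have g_le : g <= n by have := ltn_ord c; rewrite /g; repeat (case: ifP => ?); lia.
exists (inord g, s) => //; rewrite /deg2_vertex /=; congr pair; apply/val_inj => /=.
rewrite !inordK ?ltnS ?deg2_col_le ?inordK //.
move: deg2; have := ltn_ord c; rewrite /g /deg2_col /Lrung.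
have [->|c0] := eqVneq (c : nat) 0 => //=; have [->|c1] := eqVneq (c : nat) (3 * n - 2) => /=.
  by rewrite eqxx; case: ifP; lia.
by repeat (case: ifP => ?); lia.
Qed.

Local Open Scope ring_scope.

Lemma sum_distinct_pairs (T : finType) (R : nmodType) (F : T -> T -> R) :
  (forall u v, F u v = F v u) ->
  \sum_u \sum_(v | u != v) F u v =
    (\sum_u \sum_(v | (enum_rank u < enum_rank v)%N) F u v) *+ 2.
Proof.
move=> F_sym; rewrite mulr2n.
have split_ne u : \sum_(v | u != v) F u v =
    \sum_(v | (enum_rank u < enum_rank v)%N) F u v + \sum_(v | (enum_rank v < enum_rank u)%N) F u v.
  rewrite (bigID (fun v => (enum_rank u < enum_rank v)%N)) /=.
  congr (_ + _); apply: eq_bigl => v; rewrite -(inj_eq enum_rank_inj) -val_eqE /=; lia.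
rewrite (eq_bigr _ (fun u _ => split_ne u)) big_split /=; congr (_ + _).
rewrite (exchange_big_dep predT) //=.
by apply: eq_bigr => u _; apply: eq_big => [v|v _]; last exact: F_sym.
Qed.

Lemma sum_sym_square (R : comNzRingType) (W : nat -> nat -> R) N :
  (forall i j, W i j = W j i) ->
  \sum_(0 <= i < N) \sum_(0 <= j < N) W i j =
    \sum_(0 <= i < N) W i i + 2 * \sum_(0 <= i < N) \sum_(0 <= j < i) W i j.
Proof.
move=> W_sym; elim: N => [|N IHN]; first by rewrite !big_geq // mulr0 addr0.
have col_N : \sum_(0 <= i < N) W i N = \sum_(0 <= j < N) W N j.
  by apply: eq_bigr => i _; rewrite W_sym.
rewrite (eq_bigr (fun i => \sum_(0 <= j < N) W i j + W i N)); last first.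
  by move=> i _; rewrite big_nat_recr.
rewrite big_split !big_nat_recr //= IHN col_N; ring.
Qed.

Lemma sum_triangle_pow (R : comNzRingType) (y : R) m :
  \sum_(0 <= i < m) \sum_(0 <= j < i) y ^+ (i - j) = \sum_(1 <= d < m) (m - d)%:R * y ^+ d.
Proof.
elim: m => [|m IHm]; first by rewrite !big_geq.
case: m IHm => [|m] IHm; first by rewrite big_nat1 !big_geq.
have row_m : \sum_(0 <= j < m.+1) y ^+ (m.+1 - j) = \sum_(1 <= d < m.+2) y ^+ d.
  rewrite big_nat_rev big_add1 /=; apply: eq_big_nat => j j_lt.
  by congr (_ ^+ _); lia.
have pad : \sum_(1 <= d < m.+1) (m.+1 - d)%:R * y ^+ d =
    \sum_(1 <= d < m.+2) (m.+1 - d)%:R * y ^+ d.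
  by rewrite [RHS]big_nat_recr //= subnn mul0r addr0.
rewrite big_nat_recr //= IHm row_m pad -big_split; apply: eq_big_nat => d d_lt /=.
by rewrite (_ : m.+2 - d = m.+1 - d + 1)%N ?natrD ?mulrDl ?mul1r //; lia.
Qed.

Definition ordered_base_poly (T : finType) (e : rel T) (p : nat) : {poly int} :=
  \sum_(u | deg e u == p) \sum_(v | (deg e v == p) && (u != v)) 'X^(dist e u v).

Lemma ordered_base_poly_iso (T U : finType) (e : rel T) (e' : rel U) (f : T -> U) p :
  bijective f -> (forall x y, e' (f x) (f y) = e x y) ->
  ordered_base_poly e' p = ordered_base_poly e p.
Proof.
move=> f_bij f_edge; rewrite /ordered_base_poly (reindex f) /=; last exact: onW_bij.
apply: eq_big => [u|u _]; first by rewrite (deg_iso f_bij f_edge).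
rewrite (reindex f) /=; last exact: onW_bij.
apply: eq_big => [v|v _]; last by rewrite (dist_iso f_bij f_edge).
by rewrite (bij_eq f_bij) (deg_iso f_bij f_edge).
Qed.

Lemma base_poly_double (T : finType) (e : rel T) p :
  (forall u v, dist e u v = dist e v u) -> base_poly e p *+ 2 = ordered_base_poly e p.
Proof.
move=> dist_sym; pose F (u v : T) : {poly int} :=
  if (deg e u == p) && (deg e v == p) then 'X^(dist e u v) else 0.
have F_sym u v : F u v = F v u by rewrite /F andbC dist_sym.
rewrite /ordered_base_poly big_mkcond (eq_bigr (fun u => \sum_(v | u != v) F u v)).
  rewrite sum_distinct_pairs //; congr (_ *+ 2); apply: eq_bigr => u _.
  by under eq_bigl do rewrite -andbA; rewrite big_mkcondr.
move=> u _; rewrite /F; case: (deg e u == p) => /=; last by rewrite big1.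
rewrite big_mkcond [RHS]big_mkcond; apply: eq_bigr => v _.
by case: (deg e v == p); case: (u != v).
Qed.

Lemma ordered_base_poly_Lladder n : (1 < n)%N ->
  ordered_base_poly (Lladder n) 2 =
  \sum_(j : 'I_n.+1 * bool) \sum_(j' | j != j')
     'X^(ladder_dist Lrung (deg2_vertex n j) (deg2_vertex n j')).
Proof.
move=> n_gt1; have deg2 := Lladder_deg2 n_gt1; have h_inj := @deg2_vertex_inj n.
rewrite /ordered_base_poly (eq_bigl _ _ deg2) big_imset /=; last by move=> ? ? _ _ /h_inj.
apply: eq_big => [j|j _]; first by rewrite inE.
rewrite (eq_bigl _ _ (fun v => congr1 (andb^~ _) (deg2 v))).
rewrite big_mkcondr big_imset /=; last by move=> ? ? _ _ /h_inj.
rewrite -big_mkcondr; apply: eq_big => [j'|j' _]; first by rewrite inE (inj_eq h_inj).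
by rewrite Lladder_dist.
Qed.

Definition deg2_col_gaps (R : comNzRingType) (x : R) n : R :=
  x ^+ (3 * n - 2) + 2 * \sum_(1 <= k < n) x ^+ (3 * k - 1)
  + \sum_(1 <= d < n.-1) (n.-1 - d)%:R * x ^+ (3 * d).

Lemma sum_deg2_col_gaps (R : comNzRingType) (x : R) n : (0 < n)%N ->
  \sum_(0 <= g < n.+1) \sum_(0 <= g' < g) x ^+ (deg2_col n g - deg2_col n g') =
  deg2_col_gaps x n.
Proof.
move=> n_gt0; rewrite big_nat_recr //= big_ltn // big_geq // add0r.
have inner g : (0 < g < n)%N -> \sum_(0 <= g' < g) x ^+ (deg2_col n g - deg2_col n g') =
    x ^+ (3 * g - 1) + \sum_(1 <= g' < g) (x ^+ 3) ^+ (g - g').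
  move=> g_range; rewrite big_ltn; last lia.
  congr (_ + _); last (apply: eq_big_nat => g' g'_range; rewrite -exprM);
    by congr (_ ^+ _); rewrite /deg2_col /=; repeat (case: ifP => ?); lia.
have last_col : \sum_(0 <= g' < n) x ^+ (deg2_col n n - deg2_col n g') =
    x ^+ (3 * n - 2) + \sum_(1 <= g < n) x ^+ (3 * g - 1).
  rewrite big_ltn // [X in _ + X]big_nat_rev /=.
  congr (_ + _); last (apply: eq_big_nat => g g_range);
    by congr (_ ^+ _); rewrite /deg2_col /=; repeat (case: ifP => ?); lia.
rewrite (eq_big_nat _ _ inner) big_split /= last_col.
have triangle : \sum_(1 <= g < n) \sum_(1 <= g' < g) (x ^+ 3) ^+ (g - g') =
    \sum_(1 <= d < n.-1) (n.-1 - d)%:R * x ^+ (3 * d).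
  under [RHS]eq_bigr do rewrite exprM.
  rewrite -sum_triangle_pow big_add1 /=; apply: eq_big_nat => g _.
  by rewrite big_add1 /=; apply: eq_big_nat => g' _; rewrite subSS.
by rewrite /deg2_col_gaps triangle; ring.
Qed.

Definition deg2_weight (R : comNzRingType) (x : R) n (g g' : nat) : R :=
  if g == g' then 2 * x ^+ (1 + 2 * ~~ Lrung (deg2_col n g))
  else 2 * (1 + x) * x ^+ ((deg2_col n g - deg2_col n g') + (deg2_col n g' - deg2_col n g)).

Lemma deg2_weight_sym (R : comNzRingType) (x : R) n g g' :
  deg2_weight x n g g' = deg2_weight x n g' g.
Proof. by rewrite /deg2_weight eq_sym; case: eqVneq => [->|_] //; rewrite addnC. Qed.

Lemma sum_deg2_rows (R : comNzRingType) (x : R) n (g g' : 'I_n.+1) :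
  \sum_s \sum_s' (if (g, s) != (g', s') then
      x ^+ ladder_dist Lrung (deg2_vertex n (g, s)) (deg2_vertex n (g', s')) else 0) =
  deg2_weight x n g g'.
Proof.
rewrite !big_bool /ladder_dist !deg2_vertex_col /deg2_weight /= !xpair_eqE -val_eqE /=.
rewrite !andbT !andbF; have [<-|ne] := eqVneq (g : nat) g'; rewrite /= ?subnn /=.
  by rewrite eqxx /= !add0n addr0 add0r mulr2n mulrDl !mul1r.
have [] := ltn_ord g; have [] := ltn_ord g'; rewrite !ltnS => g'_le g_le.
have /negbTE -> : deg2_col n g != deg2_col n g'.
  by apply: contra ne => /eqP /deg2_col_inj ->.
by rewrite !muln0 !addn0 !addn1 !exprS; ring.
Qed.

Lemma sum_deg2_pairs (R : comNzRingType) (x : R) n : (0 < n)%N ->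
  \sum_(j : 'I_n.+1 * bool) \sum_(j' | j != j')
      x ^+ ladder_dist Lrung (deg2_vertex n j) (deg2_vertex n j') =
  2 * (2 * x + n.-1%:R * x ^+ 3 + 2 * (1 + x) * deg2_col_gaps x n).
Proof.
move=> n_gt0; set W := deg2_weight x n.
have diag : \sum_(0 <= g < n.+1) W g g = 2 * (2 * x + n.-1%:R * x ^+ 3).
  rewrite big_nat_recr //= big_ltn // /W /deg2_weight !eqxx !Lrung_deg2_col //= eqxx orbT /=.
  rewrite (eq_big_nat _ _ (F2 := fun=> 2 * x ^+ 3)) => [|g g_range]; last first.
    rewrite eqxx Lrung_deg2_col; last lia.
    by rewrite (_ : (g == 0) || (g == n) = false) //; lia.
  by rewrite sumr_const_nat subn1 -mulr_natl; ring.
have lower : \sum_(0 <= g < n.+1) \sum_(0 <= g' < g) W g g' = 2 * (1 + x) * deg2_col_gaps x n.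
  rewrite -sum_deg2_col_gaps // mulr_sumr; apply: eq_big_nat => g g_range.
  rewrite mulr_sumr; apply: eq_big_nat => g' g'_range.
  have := @deg2_col_ltn n g g'; rewrite /W /deg2_weight; case: eqVneq => [|_]; first lia.
  by move=> lt; congr (_ * _ ^+ _); lia.
have sum_prod (G : 'I_n.+1 * bool -> R) : \sum_j G j = \sum_g \sum_s G (g, s).
  by rewrite pair_bigA; apply: eq_bigr => [[]].
transitivity (\sum_(0 <= g < n.+1) \sum_(0 <= g' < n.+1) W g g').
  under eq_bigr do rewrite big_mkcond.
  rewrite sum_prod big_mkord; apply: eq_bigr => g _.
  under eq_bigr do rewrite sum_prod.
  by rewrite exchange_big big_mkord; apply: eq_bigr => g' _; exact: sum_deg2_rows.
by rewrite sum_sym_square ?diag ?lower //; [ring | exact: deg2_weight_sym].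
Qed.

Lemma deg2_closed_form (R : comNzRingType) (x : R) n : (1 < n)%N ->
  2 * x + n.-1%:R * x ^+ 3 + 2 * (1 + x) * deg2_col_gaps x n =
  2 * x + (3 * n - 1)%:R * x ^+ 3
  + 2 * (\sum_(2 <= k < n) (n - k)%:R * x ^+ (3 * k - 2))
  + 4 * (\sum_(1 <= k < n) x ^+ (3 * k - 1))
  + 2 * (\sum_(2 <= k < n) (n - k + 1)%:R * x ^+ (3 * k))
  + 2 * x ^+ (3 * n - 2) + 2 * x ^+ (3 * n - 1).
Proof.
case: n => [|[|m]] // _; rewrite /deg2_col_gaps /=.
set s1 := \sum_(1 <= k < m.+2) _; set DD := \sum_(1 <= d < m.+1) _.
have shift_A : \sum_(2 <= k < m.+2) (m.+2 - k)%:R * x ^+ (3 * k - 2) = x * DD.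
  rewrite big_add1 /= mulr_sumr; apply: eq_big_nat => k k_range.
  by rewrite mulrCA -exprS; congr (_%:R * _ ^+ _); lia.
have pad_DD : DD = \sum_(1 <= d < m.+2) (m.+1 - d)%:R * x ^+ (3 * d).
  by rewrite /DD [RHS]big_nat_recr //= subnn mul0r addr0.
have split_B : \sum_(2 <= k < m.+2) (m.+2 - k + 1)%:R * x ^+ (3 * k) + m.+2%:R * x ^+ 3 =
    2 * x * s1 + DD.
  rewrite addrC (_ : m.+2%:R * x ^+ 3 = (m.+2 - 1 + 1)%:R * x ^+ (3 * 1)); last first.
    by congr (_%:R * _); lia.
  rewrite -(big_ltn (F := fun k => (m.+2 - k + 1)%:R * x ^+ (3 * k))) // pad_DD.
  rewrite mulr_sumr -big_split; apply: eq_big_nat => k k_range /=.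
  rewrite (_ : (m.+2 - k + 1 = 2 + (m.+1 - k))%N); last lia.
  rewrite natrD mulrDl -mulrA -exprS; congr (_ + _); congr (_ * _ ^+ _); lia.
have last_pow : x ^+ (3 * m.+2 - 1) = x * x ^+ (3 * m.+2 - 2).
  by rewrite -exprS; congr (_ ^+ _); lia.
rewrite shift_A last_pow.
have -> : (3 * m.+2 - 1 = 3 * m + 5)%N by lia.
have -> : \sum_(2 <= k < m.+2) (m.+2 - k + 1)%:R * x ^+ (3 * k) =
    2 * x * s1 + DD - m.+2%:R * x ^+ 3 by rewrite -split_B; ring.
ring.
Qed.

Theorem theorem2p4 (n : nat) (hn : (2 <= n)%N) :
  base_poly (Lrel n) 2 =
    2 * 'X + (3 * n - 1)%:R * 'X^3
    + 2 * (\sum_(2 <= k < n) (n - k)%:R * 'X^(3 * k - 2))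
    + 4 * (\sum_(1 <= k < n) 'X^(3 * k - 1))
    + 2 * (\sum_(2 <= k < n) (n - k + 1)%:R * 'X^(3 * k))
    + 2 * 'X^(3 * n - 2) + 2 * 'X^(3 * n - 1).
Proof.
have n_gt0 : (0 < n)%N by lia.
have two_neq0 : (2 : {poly int}) != 0 by rewrite -polyC_natr polyC_eq0.
apply: (mulfI two_neq0); rewrite -deg2_closed_form // -sum_deg2_pairs //.
rewrite -ordered_base_poly_Lladder //.
rewrite (ordered_base_poly_iso _ (Lcoord_bij n_gt0) (Lladder_Lcoord hn)).
by rewrite mulr_natl base_poly_double // => u v; rewrite !Lrel_dist // ladder_dist_sym.
Qed.
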